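(* Let $N_a\ge N$, $N$ even, $M$ odd with $M\le N-M$, and $U>0$. Let $\theta(x)=-2\tan^{-1}(2x/U)$, $I_j=j-\frac{N+1}{2}$, $J_\alpha=\alpha-\frac{M+1}{2}$, and $C_{N,U}=\frac{U}{4}\tan\!\bigl(\frac{\pi}{2}-\frac{\pi}{2N}\bigr)+1$. For a vector $(\mathbf{k},\boldsymbol{\Lambda})=(k_{N/2+1},\dots,k_N,\Lambda_{(M+3)/2},\dots,\Lambda_M)\in\mathbb{R}^{\frac N2+\frac{M-1}{2}}$, extend it to $k_1,\dots,k_N$ and $\Lambda_1,\dots,\Lambda_M$ by $k_j=-k_{N-j+1}$ and $\Lambda_\alpha=-\Lambda_{M-\alpha+1}$ (so $\Lambda_{(M+1)/2}=0$). Define $\phi(\mathbf{k},\boldsymbol{\Lambda})=(\mathbf{k}',\boldsymbol{\Lambda}')$ by: for $\frac{M+3}{2}\le\alpha\le M$, $\Lambda'_\alpha$ is the unique real number with $$\sum_{j=1}^N\theta(2\sin k_j-2\Lambda'_\alpha)=2\pi J_\alpha-\sum_{\beta=1}^M\theta(\Lambda_\alpha-\Lambda_\beta);$$ $k'_{N/2+1}=\max\{0,\tfrac1{N_a}(2\pi I_{N/2+1}+\sum_{\beta=1}^M\theta(2\sin k_{N/2+1}-2\Lambda_\beta))\}$, and for $i>\frac N2+1$, $k'_i=\max\{k'_{i-1},\tfrac1{N_a}(2\pi I_i+\sum_{\beta=1}^M\theta(2\sin k_i-2\Lambda_\beta))\}$. Let $\Omega\subset\mathbb{R}^{\frac N2+\frac{M-1}{2}}$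 be the set defined by $$0\le k_{N/2+1}\le\cdots\le k_N\le\pi,\qquad 0\le\Lambda_{(M+3)/2}\le\cdots\le\Lambda_M\le C_{N,U}.$$ Then $\phi(\Omega)\subset\Omega$.
   Context: Here $\tan^{-1}$ takes values in $(-\pi/2,\pi/2)$. The map $\phi$ is used to find symmetric, ordered solutions of the Lieb–Wu (Bethe Ansatz) equations of the one-dimensional Hubbard model. *)

From Stdlib Require Import Reals Lra Lia ClassicalEpsilon.
Open Scope R_scope.

Fixpoint sumR (n : nat) (f : nat -> R) : R :=
  match n with
  | O => 0
  | S p => sumR p f + f n
  end.

Definition theta (U x : R) : R := -2 * atan (2 * x / U).

Definition Ij (N j : nat) : R := INR j - (INR N + 1) / 2.
Definition Ja (M a : nat) : R := INR a - (INR M + 1) / 2.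

Definition CNU (N : nat) (U : R) : R :=
  U / 4 * tan (PI / 2 - PI / (2 * INR N)) + 1.

(* A vector (k, Lambda) in R^(N/2 + (M-1)/2) is represented by two functions
   nat -> R, of which only the coordinates k_j, N/2+1 <= j <= N, and
   Lambda_a, (M+3)/2 <= a <= M, are relevant. *)

Definition kext (N : nat) (k : nat -> R) (j : nat) : R :=
  if Nat.leb j (N / 2) then - k (N + 1 - j)%nat else k j.

Definition Lext (M : nat) (L : nat -> R) (a : nat) : R :=
  if Nat.ltb a ((M + 1) / 2) then - L (M + 1 - a)%nat
  else if Nat.eqb a ((M + 1) / 2) then 0 else L a.

Definition Lambda_eq (N M : nat) (U : R) (k L : nat -> R) (a : nat) (x : R) : Prop :=
  sumR N (fun j => theta U (2 * sin (kext N k j) - 2 * x))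
  = 2 * PI * Ja M a - sumR M (fun b => theta U (Lext M L a - Lext M L b)).

Definition Lambda' (N M : nat) (U : R) (k L : nat -> R) (a : nat) : R :=
  epsilon (inhabits 0) (Lambda_eq N M U k L a).

Definition kg (N Na M : nat) (U : R) (k L : nat -> R) (i : nat) : R :=
  (2 * PI * Ij N i
   + sumR M (fun b => theta U (2 * sin (kext N k i) - 2 * Lext M L b))) / INR Na.

(* kp s = k'_(N/2+1+s) *)
Fixpoint kp (N Na M : nat) (U : R) (k L : nat -> R) (s : nat) : R :=
  match s with
  | O => Rmax 0 (kg N Na M U k L (N / 2 + 1))
  | S s' => Rmax (kp N Na M U k L s') (kg N Na M U k L (N / 2 + 1 + s))
  end.

Definition k' (N Na M : nat) (U : R) (k L : nat -> R) (i : nat) : R :=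
  kp N Na M U k L (i - (N / 2 + 1)).

Definition phi (N Na M : nat) (U : R) (v : (nat -> R) * (nat -> R))
  : (nat -> R) * (nat -> R) :=
  (k' N Na M U (fst v) (snd v), Lambda' N M U (fst v) (snd v)).

Definition Omega (N M : nat) (U : R) (v : (nat -> R) * (nat -> R)) : Prop :=
  let k := fst v in let L := snd v in
  (forall j, (N / 2 + 1 <= j <= N)%nat -> 0 <= k j <= PI) /\
  (forall j, (N / 2 + 1 <= j)%nat -> (j < N)%nat -> k j <= k (S j)) /\
  (forall a, ((M + 3) / 2 <= a <= M)%nat -> 0 <= L a <= CNU N U) /\
  (forall a, ((M + 3) / 2 <= a)%nat -> (a < M)%nat -> L a <= L (S a)).

From Stdlib Require Import Reals Lra Lia ClassicalEpsilon.
Open Scope R_scope.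

(* By the symmetries k_j = -k_(N-j+1) and Lambda_a = -Lambda_(M-a+1), and since
   theta is odd and antitone, the theta-sums split into pairs
   theta(s + l) + theta(s - l) <= 0 (for s >= 0), so they are nonpositive.
   Hence the right-hand side R_a of the Lambda-equation lies in
   [2 pi, (2M - 1) pi) and grows by at least 2 pi from a to a + 1, while the
   left-hand side F(x) is continuous and nondecreasing with F(0) <= 0 and
   F(C_{N,U}) >= (N - 1) pi, which is what the constant C_{N,U} is made for.
   As 2M <= N, the intermediate value theorem gives a solution, and the
   monotonicity of F puts every solution in [0, C_{N,U}] and orders the
   Lambda'_a.  For k', taking maxima gives nonnegativity and order, and
   2 pi I_i <= (N - 1) pi <= N_a pi together with a nonpositive theta-sum
   gives k'_i <= pi. *)

Lemma sumR_ext_in n f g :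
  (forall j, (1 <= j <= n)%nat -> f j = g j) -> sumR n f = sumR n g.
Proof.
  induction n as [|n IH]; intros Hfg; simpl; [reflexivity|].
  rewrite IH by (intros; apply Hfg; lia).
  rewrite Hfg by lia. reflexivity.
Qed.

Lemma sumR_le n f g :
  (forall j, (1 <= j <= n)%nat -> f j <= g j) -> sumR n f <= sumR n g.
Proof.
  induction n as [|n IH]; intros Hfg; simpl; [lra|].
  assert (sumR n f <= sumR n g) by (apply IH; intros; apply Hfg; lia).
  assert (f (S n) <= g (S n)) by (apply Hfg; lia).
  lra.
Qed.

Lemma sumR_lt n f g : (0 < n)%nat ->
  (forall j, (1 <= j <= n)%nat -> f j < g j) -> sumR n f < sumR n g.
Proof.
  intros Hn Hfg. destruct n as [|n]; [lia|]. simpl.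
  assert (sumR n f <= sumR n g) by (apply sumR_le; intros; left; apply Hfg; lia).
  assert (f (S n) < g (S n)) by (apply Hfg; lia).
  lra.
Qed.

Lemma sumR_const n c : sumR n (fun _ => c) = INR n * c.
Proof.
  induction n as [|n IH]; simpl sumR; [simpl; ring|].
  rewrite IH, S_INR. ring.
Qed.

Lemma sumR_nonpos n f : (forall j, (1 <= j <= n)%nat -> f j <= 0) -> sumR n f <= 0.
Proof.
  intros Hf. rewrite <- (Rmult_0_r (INR n)), <- sumR_const.
  now apply sumR_le.
Qed.

Lemma sumR_add n f g : sumR n (fun j => f j + g j) = sumR n f + sumR n g.
Proof. induction n as [|n IH]; simpl; [ring|]. rewrite IH. ring. Qed.

Lemma sumR_split n p f : sumR (n + p) f = sumR n f + sumR p (fun j => f (n + j)%nat).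
Proof.
  induction p as [|p IH].
  - rewrite Nat.add_0_r. simpl. ring.
  - rewrite Nat.add_succ_r. simpl. rewrite IH, Nat.add_succ_r. ring.
Qed.

Lemma sumR_rev n f : sumR n f = sumR n (fun j => f (n + 1 - j)%nat).
Proof.
  induction n as [|n IH]; [reflexivity|].
  change (sumR (S n) f) with (sumR n f + f (S n)).
  change (sumR (S n) (fun j => f (S n + 1 - j)%nat))
    with (sumR (1 + n) (fun j => f (S n + 1 - j)%nat)).
  rewrite sumR_split, IH.
  rewrite (sumR_ext_in n (fun j => f (n + 1 - j)%nat)
             (fun j => f (S n + 1 - (1 + j))%nat)) by (intros; f_equal; lia).
  simpl sumR. replace (n + 1 - 0)%nat with (S n) by lia.
  ring.
Qed.

Lemma sumR_pairs_even m f :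
  sumR (2 * m) f = sumR m (fun j => f j + f (2 * m + 1 - j)%nat).
Proof.
  replace (2 * m)%nat with (m + m)%nat at 1 by lia.
  rewrite sumR_split, sumR_add, (sumR_rev m (fun j => f (m + j)%nat)).
  f_equal. apply sumR_ext_in. intros. f_equal. lia.
Qed.

Lemma sumR_pairs_odd m f :
  sumR (2 * m + 1) f
  = sumR m (fun j => f j + f (2 * m + 2 - j)%nat) + f (m + 1)%nat.
Proof.
  replace (2 * m + 1)%nat with (m + (1 + m))%nat by lia.
  rewrite sumR_split, sumR_split, sumR_add,
    (sumR_rev m (fun j => f (m + (1 + j))%nat)).
  rewrite (sumR_ext_in m (fun j => f (m + (1 + (m + 1 - j)))%nat)
             (fun j => f (2 * m + 2 - j)%nat)) by (intros; f_equal; lia).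
  simpl sumR. rewrite Nat.add_0_r. ring.
Qed.

Lemma sumR_continuity n (h : nat -> R -> R) :
  (forall j, continuity (h j)) -> continuity (fun x => sumR n (fun j => h j x)).
Proof.
  intros Hh. induction n as [|n IH]; simpl.
  - apply continuity_const. intros ? ?. reflexivity.
  - now apply continuity_plus.
Qed.

Lemma nondecreasing_reflect_lt (F : R -> R) x y :
  (forall x y, x <= y -> F x <= F y) -> F x < F y -> x < y.
Proof.
  intros HF Hxy. destruct (Rlt_le_dec x y) as [H|H]; [exact H|].
  specialize (HF _ _ H). lra.
Qed.

Section Theta.

Variable U : R.
Hypothesis U_pos : 0 < U.

Lemma theta_antitone x y : x <= y -> theta U y <= theta U x.
Proof.
  intros Hxy. unfold theta.
  assert (Hdiv : 2 * x / U <= 2 * y / U).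
  { apply Rmult_le_compat_r; [left; apply Rinv_0_lt_compat|]; lra. }
  destruct Hdiv as [Hlt|Heq].
  - apply atan_increasing in Hlt. lra.
  - rewrite Heq. lra.
Qed.

Lemma theta_bounds x : - PI < theta U x < PI.
Proof. unfold theta. destruct (atan_bound (2 * x / U)). lra. Qed.

Lemma theta_opp x : theta U (- x) = - theta U x.
Proof.
  unfold theta. replace (2 * - x / U) with (- (2 * x / U)) by (field; lra).
  rewrite atan_opp. ring.
Qed.

Lemma theta_nonpos x : 0 <= x -> theta U x <= 0.
Proof.
  intros Hx. pose proof (theta_antitone 0 x Hx) as H. unfold theta at 2 in H.
  replace (2 * 0 / U) with 0 in H by (field; lra).
  rewrite atan_0 in H. lra.
Qed.

Lemma theta_pair_nonpos s l : 0 <= s -> theta U (s + l) + theta U (s - l) <= 0.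
Proof.
  intros Hs.
  pose proof (theta_antitone (- (s - l)) (s + l) ltac:(lra)) as H.
  rewrite theta_opp in H. lra.
Qed.

Lemma theta_continuous : continuity (theta U).
Proof.
  unfold theta. intros x.
  apply continuity_pt_mult; [apply continuity_pt_const; intros ? ?; reflexivity|].
  apply (continuity_pt_comp (fun x => 2 * x / U) atan).
  - apply derivable_continuous_pt. reg.
  - apply derivable_continuous_pt, derivable_pt_atan.
Qed.

End Theta.

Lemma half_spec n q : (2 * q <= n <= 2 * q + 1)%nat -> (n / 2 = q)%nat.
Proof. intros Hn. symmetry. apply Nat.div_unique with (n - 2 * q)%nat; lia. Qed.

Lemma INR_odd n : INR (2 * n + 1) = 2 * INR n + 1.
Proof. rewrite plus_INR, mult_INR. simpl. ring. Qed.

Lemma kext_low m k j :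
  (1 <= j <= m)%nat -> kext (2 * m) k j = - k (2 * m + 1 - j)%nat.
Proof.
  intros Hj. unfold kext. rewrite (half_spec (2 * m) m), (proj2 (Nat.leb_le _ _)) by lia.
  reflexivity.
Qed.

Lemma kext_high m k j : (m < j)%nat -> kext (2 * m) k j = k j.
Proof.
  intros Hj. unfold kext. rewrite (half_spec (2 * m) m), (proj2 (Nat.leb_gt _ _)) by lia.
  reflexivity.
Qed.

Lemma Lext_low m L a :
  (a <= m)%nat -> Lext (2 * m + 1) L a = - L (2 * m + 2 - a)%nat.
Proof.
  intros Ha. unfold Lext.
  rewrite (half_spec (2 * m + 1 + 1) (m + 1)) by lia.
  rewrite (proj2 (Nat.ltb_lt _ _)) by lia.
  do 2 f_equal. lia.
Qed.

Lemma Lext_mid m L : Lext (2 * m + 1) L (m + 1) = 0.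
Proof.
  unfold Lext.
  rewrite (half_spec (2 * m + 1 + 1) (m + 1)) by lia.
  rewrite Nat.ltb_irrefl, Nat.eqb_refl. reflexivity.
Qed.

Lemma Lext_high m L a : (m + 1 < a)%nat -> Lext (2 * m + 1) L a = L a.
Proof.
  intros Ha. unfold Lext.
  rewrite (half_spec (2 * m + 1 + 1) (m + 1)) by lia.
  rewrite (proj2 (Nat.ltb_ge _ _)), (proj2 (Nat.eqb_neq _ _)) by lia.
  reflexivity.
Qed.

Lemma sum_theta_Lext_nonpos U m L s c : 0 < U -> 0 <= s ->
  sumR (2 * m + 1) (fun b => theta U (s - c * Lext (2 * m + 1) L b)) <= 0.
Proof.
  intros HU Hs. rewrite sumR_pairs_odd, Lext_mid.
  assert (Hpairs : sumR m (fun b => theta U (s - c * Lext (2 * m + 1) L b)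
                    + theta U (s - c * Lext (2 * m + 1) L (2 * m + 2 - b)%nat)) <= 0).
  { apply sumR_nonpos. intros b Hb.
    rewrite Lext_low, Lext_high by lia.
    replace (s - c * - L (2 * m + 2 - b)%nat) with (s + c * L (2 * m + 2 - b)%nat) by ring.
    now apply theta_pair_nonpos. }
  pose proof (theta_nonpos U HU (s - c * 0) ltac:(lra)).
  lra.
Qed.

Definition Lambda_lhs (N : nat) (U : R) (k : nat -> R) (x : R) : R :=
  sumR N (fun j => theta U (2 * sin (kext N k j) - 2 * x)).

Definition Lambda_rhs (M : nat) (U : R) (L : nat -> R) (a : nat) : R :=
  2 * PI * Ja M a - sumR M (fun b => theta U (Lext M L a - Lext M L b)).

Section LambdaLhs.

Variables (U : R) (k : nat -> R).
Hypothesis U_pos : 0 < U.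

Lemma Lambda_lhs_nondecreasing N x y : x <= y -> Lambda_lhs N U k x <= Lambda_lhs N U k y.
Proof.
  intros Hxy. apply sumR_le. intros j _. apply theta_antitone; lra.
Qed.

Lemma Lambda_lhs_continuous N : continuity (Lambda_lhs N U k).
Proof.
  apply (sumR_continuity N (fun j x => theta U (2 * sin (kext N k j) - 2 * x))).
  intros j.
  apply (continuity_comp (fun x => 2 * sin (kext N k j) - 2 * x) (theta U)).
  - apply derivable_continuous. reg.
  - exact (theta_continuous U).
Qed.

Lemma Lambda_lhs_0_nonpos m : Lambda_lhs (2 * m) U k 0 <= 0.
Proof.
  unfold Lambda_lhs. rewrite sumR_pairs_even. apply sumR_nonpos. intros j Hj.
  rewrite kext_low, kext_high, sin_neg by lia.
  set (t := sin (k (2 * m + 1 - j)%nat)).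
  replace (2 * - t - 2 * 0) with (0 + - (2 * t)) by ring.
  replace (2 * t - 2 * 0) with (0 - - (2 * t)) by ring.
  apply theta_pair_nonpos; lra.
Qed.

Lemma theta_CNU N : (0 < N)%nat -> theta U (2 - 2 * CNU N U) = PI - PI / INR N.
Proof.
  intros HN. apply (le_INR 1) in HN. simpl INR in HN. pose proof PI_RGT_0.
  unfold theta, CNU.
  replace (2 * (2 - 2 * (U / 4 * tan (PI / 2 - PI / (2 * INR N)) + 1)) / U)
    with (- tan (PI / 2 - PI / (2 * INR N))) by (field; lra).
  rewrite atan_opp, atan_tan; [field; lra|].
  assert (0 < PI / (2 * INR N)) by (apply Rdiv_lt_0_compat; lra).
  assert (PI / (2 * INR N) < PI).
  { apply Rmult_lt_reg_r with (2 * INR N); [lra|].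
    unfold Rdiv. rewrite Rmult_assoc, Rinv_l by lra. nra. }
  lra.
Qed.

Lemma Lambda_lhs_CNU N : (0 < N)%nat ->
  PI * (INR N - 1) <= Lambda_lhs N U k (CNU N U).
Proof.
  intros HN.
  apply Rle_trans with (sumR N (fun _ => theta U (2 - 2 * CNU N U))).
  - rewrite sumR_const, theta_CNU by exact HN.
    apply lt_0_INR in HN. right. field. lra.
  - apply sumR_le. intros j _. apply theta_antitone; [exact U_pos|].
    pose proof (SIN_bound (kext N k j)). lra.
Qed.

End LambdaLhs.

Section LambdaPrime.

Variables (U : R) (m m' : nat) (k L : nat -> R).
Local Notation N := (2 * m)%nat.
Local Notation M := (2 * m' + 1)%nat.

Hypothesis U_pos : 0 < U.
Hypothesis M_small : (2 * M <= N)%nat.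
Hypothesis L_range : forall a, (m' + 2 <= a <= M)%nat -> 0 <= L a <= CNU N U.
Hypothesis L_mono : forall a, (m' + 2 <= a)%nat -> (a < M)%nat -> L a <= L (S a).

Lemma Lambda_rhs_lower a : (m' + 2 <= a <= M)%nat -> 2 * PI <= Lambda_rhs M U L a.
Proof.
  intros Ha. unfold Lambda_rhs, Ja.
  rewrite (sumR_ext_in M _ (fun b => theta U (L a - 1 * Lext M L b)))
    by (intros; rewrite (Lext_high m' L a) by lia; f_equal; ring).
  assert (sumR M (fun b => theta U (L a - 1 * Lext M L b)) <= 0)
    by (apply sum_theta_Lext_nonpos; [exact U_pos | apply L_range; lia]).
  assert (INR (m' + 2) <= INR a) by (apply le_INR; lia).
  rewrite plus_INR in H0. simpl (INR 2) in H0.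
  rewrite INR_odd. pose proof PI_RGT_0. nra.
Qed.

Lemma Lambda_rhs_upper a : (a <= M)%nat -> Lambda_rhs M U L a < PI * (2 * INR M - 1).
Proof.
  intros Ha. unfold Lambda_rhs, Ja.
  assert (sumR M (fun _ => - PI) < sumR M (fun b => theta U (Lext M L a - Lext M L b)))
    by (apply sumR_lt; [lia | intros; apply theta_bounds]).
  rewrite sumR_const in H.
  assert (INR a <= INR M) by (apply le_INR; lia).
  pose proof PI_RGT_0. nra.
Qed.

Lemma Lambda_rhs_step a : (m' + 2 <= a)%nat -> (a < M)%nat ->
  Lambda_rhs M U L a + 2 * PI <= Lambda_rhs M U L (S a).
Proof.
  intros Ha1 Ha2. unfold Lambda_rhs, Ja. rewrite S_INR.
  assert (sumR M (fun b => theta U (Lext M L (S a) - Lext M L b)) <=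
          sumR M (fun b => theta U (Lext M L a - Lext M L b))).
  { apply sumR_le. intros b _. apply theta_antitone; [exact U_pos|].
    rewrite (Lext_high m' L a), (Lext_high m' L (S a)) by lia.
    specialize (L_mono a Ha1 Ha2). lra. }
  lra.
Qed.

Lemma Lambda_lhs_0_lt_rhs a : (m' + 2 <= a <= M)%nat ->
  Lambda_lhs N U k 0 < Lambda_rhs M U L a.
Proof.
  intros Ha. pose proof (Lambda_lhs_0_nonpos U k U_pos m).
  pose proof (Lambda_rhs_lower a Ha). pose proof PI_RGT_0. lra.
Qed.

Lemma Lambda_rhs_lt_lhs_CNU a : (m' + 2 <= a <= M)%nat ->
  Lambda_rhs M U L a < Lambda_lhs N U k (CNU N U).
Proof.
  intros Ha. pose proof (Lambda_lhs_CNU U k U_pos N ltac:(lia)).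
  pose proof (Lambda_rhs_upper a ltac:(lia)).
  assert (2 * INR M <= INR N)
    by (apply le_INR in M_small; rewrite mult_INR in M_small; exact M_small).
  pose proof PI_RGT_0. nra.
Qed.

Lemma Lambda'_solves a : (m' + 2 <= a <= M)%nat ->
  Lambda_lhs N U k (Lambda' N M U k L a) = Lambda_rhs M U L a.
Proof.
  intros Ha. pose proof (Lambda_lhs_0_lt_rhs a Ha) as Hlo.
  pose proof (Lambda_rhs_lt_lhs_CNU a Ha) as Hhi.
  unfold Lambda'. apply epsilon_spec.
  assert (HC : 0 < CNU N U)
    by (apply (nondecreasing_reflect_lt (Lambda_lhs N U k));
        [exact (Lambda_lhs_nondecreasing U k U_pos N) | lra]).
  destruct (IVT (fun x => Lambda_lhs N U k x - Lambda_rhs M U L a) 0 (CNU N U))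
    as [z [_ Hz]]; [| exact HC | lra | lra |].
  - apply continuity_minus; [apply Lambda_lhs_continuous; exact U_pos|].
    apply continuity_const. intros ? ?. reflexivity.
  - exists z. unfold Lambda_eq. change (Lambda_lhs N U k z = Lambda_rhs M U L a). lra.
Qed.

Lemma Lambda'_range a : (m' + 2 <= a <= M)%nat -> 0 <= Lambda' N M U k L a <= CNU N U.
Proof.
  intros Ha. pose proof (Lambda'_solves a Ha) as Hsol.
  pose proof (Lambda_lhs_0_lt_rhs a Ha). pose proof (Lambda_rhs_lt_lhs_CNU a Ha).
  split; left; apply (nondecreasing_reflect_lt (Lambda_lhs N U k));
    solve [exact (Lambda_lhs_nondecreasing U k U_pos N) | lra].
Qed.

Lemma Lambda'_mono a : (m' + 2 <= a)%nat -> (a < M)%nat ->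
  Lambda' N M U k L a <= Lambda' N M U k L (S a).
Proof.
  intros Ha1 Ha2. left. apply (nondecreasing_reflect_lt (Lambda_lhs N U k)).
  - exact (Lambda_lhs_nondecreasing U k U_pos N).
  - rewrite !Lambda'_solves by lia.
    pose proof (Lambda_rhs_step a Ha1 Ha2). pose proof PI_RGT_0. lra.
Qed.

End LambdaPrime.

Lemma kg_le_PI U Na m m' k L i : 0 < U -> (2 * m <= Na)%nat ->
  (m + 1 <= i <= 2 * m)%nat -> 0 <= k i <= PI ->
  kg (2 * m) Na (2 * m' + 1) U k L i <= PI.
Proof.
  intros HU HNa Hi Hk. unfold kg, Ij. rewrite kext_high by lia.
  assert (sumR (2 * m' + 1) (fun b => theta U (2 * sin (k i) - 2 * Lext (2 * m' + 1) L b)) <= 0).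
  { apply sum_theta_Lext_nonpos; [exact HU|].
    pose proof (sin_ge_0 (k i) (proj1 Hk) (proj2 Hk)). lra. }
  assert (INR i <= INR (2 * m)) by (apply le_INR; lia).
  assert (INR (2 * m) <= INR Na) by (apply le_INR; lia).
  assert (1 <= INR i) by (apply (le_INR 1); lia).
  pose proof PI_RGT_0.
  apply Rmult_le_reg_r with (INR Na); [lra|].
  unfold Rdiv. rewrite Rmult_assoc, Rinv_l by lra. nra.
Qed.

Lemma kp_nonneg N Na M U k L s : 0 <= kp N Na M U k L s.
Proof.
  induction s as [|s IH]; simpl.
  - apply Rmax_l.
  - eapply Rle_trans; [exact IH | apply Rmax_l].
Qed.

Lemma kp_le_succ N Na M U k L s : kp N Na M U k L s <= kp N Na M U k L (S s).
Proof. apply Rmax_l. Qed.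

Lemma kp_le N Na M U k L s b : 0 <= b ->
  (forall t, (t <= s)%nat -> kg N Na M U k L (N / 2 + 1 + t) <= b) ->
  kp N Na M U k L s <= b.
Proof.
  intros Hb Hkg. induction s as [|s IH]; cbn [kp]; apply Rmax_lub.
  - exact Hb.
  - rewrite <- (Nat.add_0_r (N / 2 + 1)). apply Hkg. lia.
  - apply IH. intros t Ht. apply Hkg. lia.
  - apply Hkg. lia.
Qed.

Theorem lemma2p1 (N Na M : nat) (U : R) :
  (N <= Na)%nat -> Nat.Even N -> Nat.Odd M -> (M <= N - M)%nat -> 0 < U ->
  forall v : (nat -> R) * (nat -> R),
    Omega N M U v -> Omega N M U (phi N Na M U v).
Proof.
  intros HNa [m ->] [m' ->] HMN HU [k L] (Hk_range & Hk_mono & HL_range & HL_mono).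
  cbn [fst snd] in *.
  rewrite (half_spec (2 * m) m) in Hk_range, Hk_mono by lia.
  rewrite (half_spec (2 * m' + 1 + 3) (m' + 2)) in HL_range, HL_mono by lia.
  assert (HM_small : (2 * (2 * m' + 1) <= 2 * m)%nat) by lia.
  unfold Omega, phi, k'. cbn [fst snd].
  rewrite (half_spec (2 * m) m), (half_spec (2 * m' + 1 + 3) (m' + 2)) by lia.
  split; [|split; [|split]].
  - intros j Hj. split; [apply kp_nonneg|].
    apply kp_le; [left; exact PI_RGT_0|]. intros t Ht.
    rewrite (half_spec (2 * m) m) by lia.
    apply kg_le_PI; [exact HU | exact HNa | lia | apply Hk_range; lia].
  - intros j Hj1 Hj2.
    replace (S j - (m + 1))%nat with (S (j - (m + 1))) by lia.
    apply kp_le_succ.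
  - intros a Ha. now apply Lambda'_range.
  - intros a Ha1 Ha2. now apply Lambda'_mono.
Qed.
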